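(* Let $N, P, M, K, C$ be positive integers such that $M$ divides $P$ and $C$ divides $M$; put $S = P/M$ and $M' = M/C$ (so that $P/M' = CS$). Let $\mathbf{x}_1,\dots,\mathbf{x}_N\in\mathbb{R}^P$ be fixed data points. For blocks $\mathbf{v}^1,\dots,\mathbf{v}^L$ write $[\mathbf{v}^1;\dots;\mathbf{v}^L]$ for their vertical concatenation. In what follows $\mathbf{R}$ ranges over real $P\times P$ matrices with $\mathbf{R}^T\mathbf{R}=\mathbf{I}$, and code constraints are imposed for all indices. Define the CKM optimal value with $M$ subvectors $$f^*_{\mathrm{ck},M,K} = \inf \sum_{i=1}^N \big\|\mathbf{x}_i - \mathbf{R}[\mathbf{D}^1\mathbf{b}_i^1;\dots;\mathbf{D}^M\mathbf{b}_i^M]\big\|_2^2,$$ the infimum over $\mathbf{R}$, $\mathbf{D}^m\in\mathbb{R}^{S\times K}$ ($m=1,\dots,M$), and $\mathbf{b}_i^m\in\{0,1\}^K$ with $\|\mathbf{b}_i^m\|_1=1$. Define the OCKM optimal value with $M'$ subvectors (each of dimension $CS$) $$f^*_{\mathrm{ock},M',K,C} = \inf \sum_{i=1}^N \big\|\mathbf{x}_i - \mathbf{R}[\textstyle\sum_{c=1}^C\mathbf{D}^{1,c}\mathbf{b}_i^{1,c};\dots;\sum_{c=1}^C\mathbf{D}^{M',c}\mathbf{b}_i^{M',c}]\big\|_2^2,$$ the infimum over $\mathbf{R}$, $\mathbf{D}^{p,c}\in\mathbb{R}^{CS\times K}$ ($p=1,\dots,M'$, $c=1,\dots,C$), and $\mathbf{b}_i^{p,c}\in\{0,1\}^K$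 with $\|\mathbf{b}_i^{p,c}\|_1=1$. Then $f^*_{\mathrm{ock},M',K,C} \le f^*_{\mathrm{ck},M,K}$.
   Context: $\|\cdot\|_2$ is the Euclidean norm and $\|\cdot\|_1$ the $\ell_1$ norm. These are the optimal distortion errors of Cartesian $K$-means (CKM) and optimized Cartesian $K$-means (OCKM); under the stated choices both encodings use code length $M\log_2 K$ bits. *)

From HB Require Import structures.
From mathcomp Require Import all_boot all_order all_algebra.
From mathcomp Require Import classical_sets reals.
Set Implicit Arguments. Unset Strict Implicit. Unset Printing Implicit Defensive.
Import Order.TTheory GRing.Theory Num.Theory.
Local Open Scope ring_scope.
Local Open Scope classical_set_scope.

Lemma ckm_dim (P M : nat) : (M %| P)%N -> (M * (P %/ M))%N = P.
Proof. by move=> h; rewrite mulnC divnK. Qed.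

Lemma ockm_dim (P M C : nat) : (M %| P)%N -> (C %| M)%N ->
  (M %/ C * (C * (P %/ M)))%N = P.
Proof. by move=> h1 h2; rewrite mulnA divnK // mulnC divnK. Qed.

Definition sqnorm (R : realType) (n : nat) (v : 'cV[R]_n) : R :=
  \sum_(i < n) (v i 0) ^+ 2.

Definition onehot (R : realType) (K : nat) (b : 'cV[R]_K) : Prop :=
  (forall k, b k 0 = 0 \/ b k 0 = 1) /\ \sum_(k < K) `|b k 0| = 1.

Definition orthonormal_mx (R : realType) (P : nat) (Q : 'M[R]_P) : Prop :=
  Q^T *m Q = 1%:M.

(* vertical concatenation [v^1; ...; v^L] of L blocks of size d, where the
   block l is the (transposed) row l of Y; cast to dimension P. *)
Definition vcat (R : realType) (L d P : nat) (h : (L * d)%N = P)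
  (Y : 'M[R]_(L, d)) : 'cV[R]_P :=
  (castmx (erefl 1%N, h) (mxvec Y))^T.

Definition ckm_recon (R : realType) (P M K : nat) (hMP : (M %| P)%N)
  (D : 'I_M -> 'M[R]_(P %/ M, K)) (b : 'I_M -> 'cV[R]_K) : 'cV[R]_P :=
  vcat (ckm_dim hMP) (\matrix_(m < M) (D m *m b m)^T).

Definition ockm_recon (R : realType) (P M C K : nat)
  (hMP : (M %| P)%N) (hCM : (C %| M)%N)
  (D : 'I_(M %/ C) -> 'I_C -> 'M[R]_(C * (P %/ M), K))
  (b : 'I_(M %/ C) -> 'I_C -> 'cV[R]_K) : 'cV[R]_P :=
  vcat (ockm_dim hMP hCM)
    (\matrix_(p < M %/ C) (\sum_(c < C) D p c *m b p c)^T).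

Definition f_ck (R : realType) (N P M K : nat) (hMP : (M %| P)%N)
  (x : 'I_N -> 'cV[R]_P) : R :=
  inf [set v : R | exists (Q : 'M[R]_P)
        (D : 'I_M -> 'M[R]_(P %/ M, K)) (b : 'I_N -> 'I_M -> 'cV[R]_K),
        [/\ orthonormal_mx Q, (forall i m, onehot (b i m)) &
            v = \sum_(i < N) sqnorm (x i - Q *m ckm_recon hMP D (b i))]].

Definition f_ock (R : realType) (N P M C K : nat)
  (hMP : (M %| P)%N) (hCM : (C %| M)%N) (x : 'I_N -> 'cV[R]_P) : R :=
  inf [set v : R | exists (Q : 'M[R]_P)
        (D : 'I_(M %/ C) -> 'I_C -> 'M[R]_(C * (P %/ M), K))
        (b : 'I_N -> 'I_(M %/ C) -> 'I_C -> 'cV[R]_K),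
        [/\ orthonormal_mx Q, (forall i p c, onehot (b i p c)) &
            v = \sum_(i < N) sqnorm (x i - Q *m ockm_recon hMP hCM D (b i))]].

(* Every CKM configuration is an OCKM configuration with the same
   reconstructions: group the M codebooks into M' = M / C groups of C, and let
   the codebook D^{p,c} of dimension CS carry the CKM codebook D^{pC+c} in its
   c-th band of S rows and zeros elsewhere, with the code b^{p,c} := b^{pC+c}.
   Then the c-th summand of [sum_c D^{p,c} b^{p,c}] fills exactly the c-th band,
   so the OCKM reconstruction is the CKM one.  The OCKM feasible values thus
   contain the (nonempty) CKM ones and are bounded below by 0, whence the
   inequality of the infima. *)
From HB Require Import structures.
From mathcomp Require Import all_boot all_order all_algebra.
From mathcomp Require Import classical_sets reals.
Set Implicit Arguments. Unset Strict Implicit. Unset Printing Implicit Defensive.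
Import Order.TTheory GRing.Theory Num.Theory.

Lemma index_allpairs (T1 T2 : eqType) (s : seq T1) (t : seq T2) x y :
  x \in s -> y \in t ->
  index (x, y) [seq (a, b) | a <- s, b <- t] = index x s * size t + index y t.
Proof.
move=> + yt; elim: s => //= a s IH; rewrite in_cons index_cat.
have [->|nxa] /= := eqVneq x a.
  rewrite (@index_map _ _ (pair a)); last by move=> u v [].
  by rewrite (map_f (pair a) yt) mul0n add0n.
move=> xs; rewrite (negbTE (_ : (x, y) \notin _)); last first.
  by apply/mapP=> -[b _ [/eqP]]; rewrite (negbTE nxa).
by rewrite size_map IH // mulSn addnA.
Qed.

Lemma index_enum_rank (T : finType) (x : T) : index x (enum T) = enum_rank x.
Proof.
by rewrite -{1}(nth_enum_rank x x) index_uniq ?enum_uniq // -cardE ltn_ord.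
Qed.

Lemma val_mxvec_index m n (i : 'I_m) (j : 'I_n) :
  val (mxvec_index i j) = (i * n + j)%N.
Proof.
rewrite /mxvec_index /= -index_enum_rank enumT unlock /= /prod_enum.
by rewrite index_allpairs ?mem_enum // !index_enum_ord size_enum_ord.
Qed.

Local Open Scope ring_scope.

Lemma mxvecE_val (T : Type) m n (A : 'M[T]_(m, n)) (k : 'I_(m * n))
    (i : 'I_m) (j : 'I_n) :
  k = (i * n + j)%N :> nat -> mxvec A 0 k = A i j.
Proof.
move=> hk; have -> : k = mxvec_index i j by apply: val_inj; rewrite val_mxvec_index.
by rewrite mxvecE.
Qed.

Lemma vcatE (R : realType) (L d P : nat) (h : (L * d)%N = P)
    (Y : 'M[R]_(L, d)) (k : 'I_P) (i : 'I_L) (j : 'I_d) :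
  k = (i * d + j)%N :> nat -> vcat h Y k 0 = Y i j.
Proof.
move=> hk; rewrite /vcat mxE castmxE /=.
by rewrite (_ : cast_ord _ _ = 0); [exact: mxvecE_val | exact: val_inj].
Qed.

Lemma onehot_delta (R : realType) K (k0 : 'I_K) :
  onehot (delta_mx k0 0 : 'cV[R]_K).
Proof.
split=> [k|]; first by rewrite mxE; case: (k == k0); [right | left].
rewrite (bigD1 k0) //= big1 => [|k /negbTE nkk0]; last by rewrite mxE nkk0 normr0.
by rewrite mxE !eqxx normr1 addr0.
Qed.

Lemma sqnorm_ge0 (R : realType) n (v : 'cV[R]_n) : 0 <= sqnorm v.
Proof. by apply: sumr_ge0 => i _; apply: sqr_ge0. Qed.

Section CkmAsOckm.

Variables (R : realType) (P M C K : nat).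
Hypotheses (hMP : (M %| P)%N) (hCM : (C %| M)%N).

Local Notation S := (P %/ M)%N.

Lemma group_block_subproof (p : 'I_(M %/ C)) (c : 'I_C) : (p * C + c < M)%N.
Proof.
rewrite -{2}(divnK hCM); apply: (@leq_trans (p.+1 * C)).
  by rewrite mulSnr ltn_add2l.
by rewrite leq_mul2r ltn_ord orbT.
Qed.

Definition group_block (p : 'I_(M %/ C)) (c : 'I_C) : 'I_M :=
  Ordinal (group_block_subproof p c).

Lemma band_offset_subproof (q : 'I_(C * S)) : (q %% S < S)%N.
Proof.
have : (0 < C * S)%N := leq_ltn_trans (leq0n q) (ltn_ord q).
by rewrite muln_gt0 => /andP[_ /ltn_pmod->].
Qed.

Definition band_offset (q : 'I_(C * S)) : 'I_S := Ordinal (band_offset_subproof q).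

Definition banded_codebook (D : 'I_M -> 'M[R]_(S, K)) (p : 'I_(M %/ C)) (c : 'I_C) :
  'M[R]_(C * S, K) :=
  \matrix_(q, k) if (q %/ S)%N == c then D (group_block p c) (band_offset q) k else 0.

Lemma ockm_recon_banded (D : 'I_M -> 'M[R]_(S, K)) (b : 'I_M -> 'cV[R]_K) :
  ockm_recon hMP hCM (banded_codebook D) (fun p c => b (group_block p c))
  = ckm_recon hMP D b.
Proof.
apply/colP => k.
have : (0 < M %/ C * (C * S))%N.
  by rewrite (ockm_dim hMP hCM) (leq_ltn_trans (leq0n k)).
rewrite muln_gt0 => /andP[_ hCS].
have hp : (k %/ (C * S) < M %/ C)%N by rewrite ltn_divLR // (ockm_dim hMP hCM).
have hq : (k %% (C * S) < C * S)%N by rewrite ltn_pmod.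
have hS : (0 < S)%N by move: hCS; rewrite muln_gt0 => /andP[].
have hc : (k %% (C * S) %/ S < C)%N by rewrite ltn_divLR // mulnC.
pose p : 'I_(M %/ C) := Ordinal hp; pose q : 'I_(C * S) := Ordinal hq.
pose c : 'I_C := Ordinal hc.
rewrite /ockm_recon (@vcatE _ _ _ _ _ _ _ p q); last by rewrite /= -divn_eq.
rewrite /ckm_recon (@vcatE _ _ _ _ _ _ _ (group_block p c) (band_offset q)); last first.
  by rewrite /= mulnDl -addnA -divn_eq -mulnA -divn_eq.
rewrite !mxE summxE (bigD1 c) //= big1 => [|c' nc'c]; last first.
  rewrite !mxE big1 // => k' _.
  by rewrite mxE (_ : (_ == _) = false) ?mul0r //; apply/negbTE; rewrite eq_sym.
by rewrite addr0 !mxE; apply: eq_bigr => k' _; rewrite mxE eqxx.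
Qed.

End CkmAsOckm.

Local Open Scope classical_set_scope.

Theorem theorem2 (R : realType) (N P M K C : nat)
  (hN : (0 < N)%N) (hP : (0 < P)%N) (hM : (0 < M)%N) (hK : (0 < K)%N)
  (hC : (0 < C)%N) (hMP : (M %| P)%N) (hCM : (C %| M)%N)
  (x : 'I_N -> 'cV[R]_P) :
  f_ock K hMP hCM x <= f_ck K hMP x.
Proof.
rewrite /f_ock /f_ck; set ock := (X in inf X <= _); set ck := (X in _ <= inf X).
have ock_lb0 : lbound ock 0.
  by move=> _ [Q [D [b [_ _ ->]]]]; apply: sumr_ge0 => i _; apply: sqnorm_ge0.
have ck_sub_ock : ck `<=` ock.
  move=> _ [Q [D [b [hQ hb ->]]]].
  exists Q, (banded_codebook hCM D), (fun i p c => b i (group_block hCM p c)).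
  split=> //.
  by apply: eq_bigr => i _; rewrite ockm_recon_banded.
have ck_nonempty : ck !=set0.
  exists (\sum_(i < N) sqnorm (x i - 1%:M *m ckm_recon hMP (fun _ => 0)
                (fun _ => delta_mx (Ordinal hK) 0))).
  exists 1%:M, (fun _ => 0), (fun _ _ => delta_mx (Ordinal hK) 0); split => //.
    by rewrite /orthonormal_mx trmx1 mul1mx.
  by move=> *; apply: onehot_delta.
apply: lb_le_inf ck_nonempty _ => v ck_v.
by apply: ge_inf; [exists 0 | exact: ck_sub_ock].
Qed.
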